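(* Let $d\ge2$, $1\le r_p\le n_p$ for $1\le p\le d$, let $f:\Omega\to\mathbb{R}$ be any function on $\Omega=\mathrm{St}(r_1,n_1,\mathbb{C})\times\cdots\times\mathrm{St}(r_d,n_d,\mathbb{C})$, and let $\tilde f=f\circ\rho$ on $\Upsilon=\mathcal{U}_{n_1}\times\cdots\times\mathcal{U}_{n_d}$. Then $f$ is scale invariant if and only if $\tilde f$ is scale invariant.
   Context: $\mathrm{St}(r,n,\mathbb{C})=\{X\in\mathbb{C}^{n\times r}:X^HX=I_r\}$, $\mathcal{U}_n$ the unitary group, and $\rho:\Upsilon\to\Omega$ keeps the first $r_p$ columns of the $p$-th component for each $p$. A function $g$ on $\mathrm{St}(r,n,\mathbb{C})$ is scale invariant if $g(XR)=g(X)$ for all $X$ and all $r\times r$ diagonal $R$ with unimodular diagonal entries. $f$ is scale invariant if for every $p$ and every fixed choice of the other components, the restricted function $X\mapsto f(X^{(1)},\dots,X^{(p-1)},X,X^{(p+1)},\dots,X^{(d)})$ on $\mathrm{St}(r_p,n_p,\mathbb{C})$ is scale invariant; $\tilde f$ is scale invariant in the same sense, with $\mathcal{U}_{n_p}=\mathrm{St}(n_p,n_p,\mathbb{C})$ in place of $\mathrm{St}(r_p,n_p,\mathbb{C})$. *)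

From HB Require Import structures.
From mathcomp Require Import all_boot all_order all_algebra.
From mathcomp Require Import reals.
From mathcomp Require Import complex.
Set Implicit Arguments. Unset Strict Implicit. Unset Printing Implicit Defensive.
Import Order.TTheory GRing.Theory Num.Theory.
Local Open Scope ring_scope.
Local Open Scope complex_scope.

Definition ctrmx (R : rcfType) (m n : nat) (X : 'M[R[i]]_(m, n)) : 'M[R[i]]_(n, m) :=
  (map_mx Num.conj X)^T.

Definition stiefel (R : rcfType) (n r : nat) (X : 'M[R[i]]_(n, r)) : Prop :=
  ctrmx X *m X = 1%:M.

(* g : St(r,n,C) -> R (given as a function on all n x r matrices, only its
   values on St(r,n,C) matter) is scale invariant:
   g (X R) = g X for every X in St(r,n,C) and every diagonal R with
   unimodular diagonal entries. *)
Definition scale_invariant_St (R : rcfType) (n r : nat) (T : Type)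
  (g : 'M[R[i]]_(n, r) -> T) : Prop :=
  forall X : 'M[R[i]]_(n, r), stiefel X ->
  forall D : 'rV[R[i]]_r, (forall j, `|D 0 j| = 1) ->
  g (X *m diag_mx D) = g X.

Definition scale_invariant_prod (R : rcfType) (d : nat) (n m : 'I_d -> nat)
  (T : Type) (h : (forall p : 'I_d, 'M[R[i]]_(n p, m p)) -> T) : Prop :=
  forall (p : 'I_d) (Xo : forall q : 'I_d, 'M[R[i]]_(n q, m q)),
    (forall q, q != p -> stiefel (Xo q)) ->
    scale_invariant_St (fun X : 'M[R[i]]_(n p, m p) =>
       h (@dfwith _ (fun q : 'I_d => 'M[R[i]]_(n q, m q)) Xo p X)).

Definition first_cols (R : rcfType) (n r : nat) (H : (r <= n)%N)
  (U : 'M[R[i]]_n) : 'M[R[i]]_(n, r) :=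
  \matrix_(a < n, j < r) U a (widen_ord H j).

Definition rho (R : rcfType) (d : nat) (n r : 'I_d -> nat)
  (H : forall p, (r p <= n p)%N)
  (U : forall p : 'I_d, 'M[R[i]]_(n p, n p)) : forall p : 'I_d, 'M[R[i]]_(n p, r p) :=
  fun p => first_cols (H p) (U p).

(* Scale invariance only ever tests a component on a Stiefel point, and
   rho maps Upsilon onto Omega: every X in St(r, n, C) is the first r columns
   of a unitary matrix (complete the orthonormal rows of X^H by Gram-Schmidt on
   their orthogonal complement).  Right multiplication by a unimodular diagonal
   matrix commutes with taking the first r columns, provided the diagonal of
   size r is padded with ones to size n.  So a scale-invariance test for f~ at
   a point of Upsilon is a test for f at its image under rho, and conversely
   every test for f at a point of Omega is obtained this way from a lifted
   point of Upsilon. *)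
From HB Require Import structures.
From mathcomp Require Import all_boot all_order all_algebra.
From mathcomp Require Import reals.
From mathcomp Require Import complex.
From mathcomp Require Import sesquilinear spectral.
From mathcomp Require Import boolp.
Import Order.TTheory GRing.Theory Num.Theory.
Local Open Scope ring_scope.
Local Open Scope sesquilinear_scope.
Set Implicit Arguments. Unset Strict Implicit.

Section Stiefel.
Variable R : rcfType.
Local Notation C := R[i].

Lemma ctrmxE m n (X : 'M[C]_(m, n)) : ctrmx X = X^t*.
Proof. by rewrite /ctrmx map_trmx. Qed.

Lemma ctrmxK m n (X : 'M[C]_(m, n)) : ctrmx (ctrmx X) = X.
Proof. by apply/matrixP => i j; rewrite !mxE conjCK. Qed.

Lemma stiefelE n r (X : 'M[C]_(n, r)) : stiefel X <-> ctrmx X \is unitarymx.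
Proof.
rewrite /stiefel; split=> [XX|/unitarymxP]; first apply/unitarymxP;
  by rewrite -ctrmxE ctrmxK.
Qed.

Lemma stiefel1 n : stiefel (1%:M : 'M[C]_n).
Proof.
rewrite /stiefel mulmx1; apply/matrixP => a b.
by rewrite /ctrmx !mxE conjC_nat eq_sym.
Qed.

Lemma unitarymx_col_completion r n (V : 'M[C]_(r, n)) : V \is unitarymx ->
  exists W : 'M[C]_(n - r, n), col_mx V W \is unitarymx.
Proof.
move=> VU; set O := orthomx Num.conj (mx_of_hermitian (hermitian1mx _)) V.
have -> : (n - r)%N = \rank O by rewrite rank_ortho (mxrank_unitary VU).
exists (schmidt (row_base O)); apply/unitarymxP.
rewrite tr_col_mx map_row_mx mul_col_row.
rewrite !(unitarymxP _) ?schmidt_unitarymx ?rank_leq_col //.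
have eqO : (schmidt (row_base O) :=: O)%MS.
  exact: eqmx_trans (eqmx_schmidt_free (row_base_free O)) (eq_row_base O).
have -> : V *m (schmidt (row_base O))^t* = 0.
  by apply/orthomx1P; rewrite orthomx_sym eqO.
have -> : schmidt (row_base O) *m V^t* = 0 by apply/orthomx1P; rewrite eqO.
by rewrite -scalar_mx_block.
Qed.

Lemma unitarymx_completion r n (h : (r <= n)%N) (V : 'M[C]_(r, n)) :
  V \is unitarymx ->
  exists U : 'M[C]_n, U \is unitarymx /\ forall j a, U (widen_ord h j) a = V j a.
Proof.
move=> /unitarymx_col_completion [W].
move: (subnKC h) W; move: (n - r)%N => k def_n; subst n => W WU.
exists (col_mx V W); split=> // j a.
have -> : widen_ord h j = lshift k j by apply: val_inj.
by rewrite col_mxEu.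
Qed.

Lemma stiefel_first_cols n r (h : (r <= n)%N) (U : 'M[C]_n) :
  stiefel U -> stiefel (first_cols h U).
Proof.
rewrite /stiefel => UU; apply/matrixP => i j.
have := congr1 (fun M : 'M[C]_n => M (widen_ord h i) (widen_ord h j)) UU.
by rewrite !mxE => <-; apply: eq_bigr => a _; rewrite !mxE.
Qed.

Lemma first_cols_onto n r (h : (r <= n)%N) (X : 'M[C]_(n, r)) :
  stiefel X -> exists U : 'M[C]_n, stiefel U /\ first_cols h U = X.
Proof.
move=> /stiefelE /(unitarymx_completion h) [U [UU UX]].
exists (ctrmx U); split; first by apply/stiefelE; rewrite ctrmxK.
by apply/matrixP => a j; rewrite !mxE UX !mxE conjCK.
Qed.

Lemma first_cols_mul_diag n r (h : (r <= n)%N) (U : 'M[C]_n) (D : 'rV[C]_n) :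
  first_cols h (U *m diag_mx D) =
  first_cols h U *m diag_mx (\row_j D 0 (widen_ord h j)).
Proof. by apply/matrixP => a j; rewrite !mul_mx_diag !mxE. Qed.

Definition pad_ones n r (D : 'rV[C]_r) : 'rV[C]_n :=
  \row_a oapp (D 0) 1 (insub (val a) : option 'I_r).

Lemma pad_ones_unimodular n r (D : 'rV[C]_r) :
  (forall j, `|D 0 j| = 1) -> forall a, `|pad_ones n D 0 a| = 1.
Proof. by move=> D1 a; rewrite mxE; case: insub => [j|] /=; rewrite ?D1 ?normr1. Qed.

Lemma first_pad_ones n r (h : (r <= n)%N) (D : 'rV[C]_r) :
  \row_j pad_ones n D 0 (widen_ord h j) = D.
Proof. by apply/matrixP => a j; rewrite !mxE (ord1 a) valK. Qed.

End Stiefel.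

Lemma eq_dfwith (I : eqType) (T : I -> Type) (A B : forall q, T q) p (Y : T p) :
  (forall q, p != q -> A q = B q) -> dfwith A Y = dfwith B Y.
Proof.
move=> AB; apply: functional_extensionality_dep => q.
by case: (eqVneq p q) => [<-|pq]; rewrite ?dfwith_in ?dfwith_out ?AB.
Qed.

Section Rho.
Variables (R : rcfType) (d : nat) (n r : 'I_d -> nat).
Hypothesis hrn : forall p, (r p <= n p)%N.
Local Notation C := R[i].

Lemma rho_dfwith (Uo : forall p, 'M[C]_(n p)) p (V : 'M[C]_(n p)) :
  rho hrn (dfwith Uo V) = dfwith (rho hrn Uo) (first_cols (hrn p) V).
Proof.
apply: functional_extensionality_dep => q; rewrite /rho.
by case: (eqVneq p q) => [<-|pq]; rewrite ?dfwith_in ?dfwith_out.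
Qed.

Lemma rho_lift_off (p : 'I_d) (Xo : forall q, 'M[C]_(n q, r q)) :
  (forall q, q != p -> stiefel (Xo q)) ->
  exists Uo : forall q, 'M[C]_(n q),
    (forall q, stiefel (Uo q)) /\ forall q, q != p -> rho hrn Uo q = Xo q.
Proof.
move=> XoS.
have lift q : exists U : 'M[C]_(n q),
    stiefel U /\ (q != p -> first_cols (hrn q) U = Xo q).
  have [_|qp] := eqVneq q p; first by exists 1%:M; split; first exact: stiefel1.
  by have [U [US UX]] := first_cols_onto (hrn q) (XoS q qp); exists U.
have [Uo UoP] := fin_all_exists lift.
by exists Uo; split=> q; [case: (UoP q) | case: (UoP q) => _].
Qed.

Lemma scale_invariant_rho (f : (forall p, 'M[C]_(n p, r p)) -> R) :
  scale_invariant_prod f -> scale_invariant_prod (fun U => f (rho hrn U)).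
Proof.
move=> fS p Uo UoS U US D D1 /=; rewrite !rho_dfwith first_cols_mul_diag.
apply: fS; last by move=> j; rewrite mxE.
- by move=> q qp; apply/stiefel_first_cols/UoS.
- exact: stiefel_first_cols.
Qed.

Lemma scale_invariant_of_rho (f : (forall p, 'M[C]_(n p, r p)) -> R) :
  scale_invariant_prod (fun U => f (rho hrn U)) -> scale_invariant_prod f.
Proof.
move=> fS p Xo XoS X XS D D1 /=.
have [Uo [UoS UoX]] := rho_lift_off XoS.
have [U [US UX]] := first_cols_onto (hrn p) XS.
have rhoUo (Y : 'M[C]_(n p, r p)) : dfwith (rho hrn Uo) Y = dfwith Xo Y.
  by apply: eq_dfwith => q pq; rewrite UoX // eq_sym.
have := fS p Uo (fun q _ => UoS q) U US (pad_ones (n p) D) (pad_ones_unimodular D1).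
by rewrite /= !rho_dfwith first_cols_mul_diag UX first_pad_ones !rhoUo.
Qed.

End Rho.

Theorem corollary2p5 (R : realType) (d : nat) (hd : (2 <= d)%N)
  (n r : 'I_d -> nat) (hr1 : forall p, (1 <= r p)%N) (hrn : forall p, (r p <= n p)%N)
  (f : (forall p : 'I_d, 'M[R[i]]_(n p, r p)) -> R) :
  scale_invariant_prod f <->
  scale_invariant_prod (fun U : forall p : 'I_d, 'M[R[i]]_(n p, n p) => f (rho hrn U)).
Proof.
by split; [apply: scale_invariant_rho | apply: scale_invariant_of_rho].
Qed.
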